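(* Let $X$ be a $T_1$ space and $\mathcal{P}$ an ideal of closed subsets of $X$. Then every set $Z_\mathcal{P}(f)=\{x\in X\colon f(x)=0\}$ with $f\in C(X)_\mathcal{P}$ is closed in $X$ if and only if $C(X)_\mathcal{P}=C(X)$.
   Context: An ideal of closed subsets of $X$ is a family $\mathcal{P}$ of closed subsets closed under finite unions and under passing to closed subsets. $D_f$ is the set of discontinuity points of $f\in\mathbb{R}^X$; $C(X)_\mathcal{P}=\{f\in\mathbb{R}^X\colon\overline{D_f}\in\mathcal{P}\}$; $C(X)$ is the ring of continuous real-valued functions on $X$. *)

From HB Require Import structures.
From mathcomp Require Import all_boot all_order all_algebra.
From mathcomp Require Import all_classical all_reals all_analysis.
Set Implicit Arguments. Unset Strict Implicit. Unset Printing Implicit Defensive.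
Import Order.TTheory GRing.Theory Num.Theory.
Import numFieldNormedType.Exports.
Local Open Scope classical_set_scope.
Local Open Scope ring_scope.

Definition closed_ideal (X : topologicalType) (P : set (set X)) : Prop :=
  [/\ (forall A, P A -> closed A),
      P set0,
      (forall A B, P A -> P B -> P (A `|` B)) &
      (forall A B, P A -> closed B -> B `<=` A -> P B)].

Definition discont (X : topologicalType) (R : realType) (f : X -> R) : set X :=
  [set x | ~ {for x, continuous f}].

Definition CP (X : topologicalType) (R : realType) (P : set (set X)) : set (X -> R) :=
  [set f | P (closure (discont f))].

Definition CX (X : topologicalType) (R : realType) : set (X -> R) :=
  [set f | continuous f].

Definition Zset (X : topologicalType) (R : realType) (f : X -> R) : set X :=
  [set x | f x = 0].

From mathcomp Require Import all_boot all_order all_algebra.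
From mathcomp Require Import all_classical all_reals all_analysis.
Set Implicit Arguments. Unset Strict Implicit. Unset Printing Implicit Defensive.
Import GRing.Theory numFieldNormedType.Exports.
Local Open Scope classical_set_scope.
Local Open Scope ring_scope.

(* Zero sets of continuous functions are always closed, and continuous
   functions lie in C(X)_P because P contains the empty set.  Conversely, let
   x be a discontinuity point of some f in C(X)_P.  Since X is T_1, {x} is a
   closed subset of the closure of D_f, hence {x} is in P; the indicator of
   {x} is discontinuous at most at x, so it lies in C(X)_P too.  Its zero set
   is X \ {x}; if that is closed then x is isolated, and every function is
   continuous at an isolated point, contradicting the choice of x. *)

Section Discontinuity.
Variables (R : realType) (X : topologicalType).

Lemma discont_eq0 (f : X -> R) : discont f = set0 <-> continuous f.
Proof.
split=> [Df0 x | fC]; last by apply/seteqP; split=> x //= /(_ (fC x)).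
by apply: contrapT => Dx; have : discont f x by []; rewrite Df0.
Qed.

Lemma closed_Zset (f : X -> R) : continuous f -> closed (Zset f).
Proof.
move=> fC; apply: (@preimage_closed _ _ f [set 0]); last exact: closed_eq.
by move=> x _; exact: fC.
Qed.

Lemma Zset_indic (A : set X) : Zset (\1_A : X -> R) = ~` A.
Proof.
apply/seteqP; split=> x; rewrite /Zset /= indicE.
  by move=> + Ax; rewrite (mem_set Ax) => /eqP; rewrite oner_eq0.
by move=> nAx; rewrite memNset.
Qed.

Lemma discont_indic (A : set X) :
  discont (\1_A : X -> R) `<=` ~` (interior A `|` interior (~` A)).
Proof.
move=> x Dx [] Ax; apply: Dx.
- apply: (near_cst_continuous (1 : R)); apply: filterS Ax => y Ay.
  by rewrite indicE mem_set.
- apply: (near_cst_continuous (0 : R)); apply: filterS Ax => y nAy.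
  by rewrite indicE memNset.
Qed.

Lemma continuous_at_isolated (f : X -> R) (x : X) :
  open [set x] -> {for x, continuous f}.
Proof.
move=> ox; apply: (near_cst_continuous (f x)).
by apply: filterS (open_nbhs_nbhs (conj ox erefl)) => y ->.
Qed.

Lemma discont_indic1 (x : X) : accessible_space X ->
  discont (\1_[set x] : X -> R) `<=` [set x].
Proof.
move=> T1 y /discont_indic yD; apply: contrapT => yx; apply: yD; right.
rewrite (_ : interior _ = ~` [set x]) //; apply/interior_id.
exact/closed_openC/accessible_closed_set1.
Qed.

End Discontinuity.

Section ClosedIdeal.
Variables (R : realType) (X : topologicalType) (P : set (set X)).
Hypothesis Pideal : closed_ideal P.

Lemma CX_subset_CP : @CX X R `<=` CP P.
Proof.
case: Pideal => _ P0 _ _ f /discont_eq0 Df0.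
by rewrite /CP /= Df0 closure0.
Qed.

Lemma CP_discont_subset (A : set X) (f : X -> R) :
  P A -> discont f `<=` A -> CP P f.
Proof.
case: Pideal => Pcl _ _ PS PA DA; apply: (PS _ _ PA); first exact: closed_closure.
by rewrite (closure_id A).1; [exact: closureS | exact: Pcl].
Qed.

Lemma open_set1_of_discont (f : X -> R) (x : X) : accessible_space X ->
  (forall g : X -> R, CP P g -> closed (Zset g)) ->
  CP P f -> discont f x -> open [set x].
Proof.
move=> T1 ZP Pf Dx; case: Pideal => _ _ _ PS.
have Px : P [set x].
  apply: (PS (closure (discont f)) _ Pf (@accessible_closed_set1 _ T1 x)) => _ ->.
  exact: subset_closure.
have Pg : CP P (\1_[set x] : X -> R) := CP_discont_subset Px (discont_indic1 T1).
have : closed (~` [set x]) by rewrite -(Zset_indic R); exact: ZP.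
by move=> /closed_openC; rewrite setCK.
Qed.

End ClosedIdeal.

Theorem theorem2p6 (R : realType) (X : topologicalType) (P : set (set X)) :
  accessible_space X -> closed_ideal P ->
  ((forall f : X -> R, CP P f -> closed (Zset f)) <-> CP P = @CX X R).
Proof.
move=> T1 Pideal; split=> [ZP | ->]; last exact: closed_Zset.
apply/seteqP; split; last exact: CX_subset_CP.
move=> f Pf; apply/discont_eq0/seteqP; split=> // x Dx.
exact/Dx/continuous_at_isolated/(open_set1_of_discont Pideal T1 ZP Pf Dx).
Qed.
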